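(* Let $C\subseteq 2^X$ be an isometric concept class and let $(c_1,\dots,c_m)$ be an ordering of all concepts of $C$; write $C_i=\{c_1,\dots,c_i\}$ for $1\le i\le m$. The following are equivalent: (1) every $C_i$ is ample; (2) for every $i$, $c_i$ is a corner of $C_i$; (3) every $C_i$ is isometric; (4) every $C_i$ is weakly isometric.
   Context: $X$ is a finite set; a concept class is $C\subseteq 2^X$. $C|Y=\{c\cap Y:c\in C\}$; $Y$ is shattered by $C$ if $C|Y=2^Y$. A cube of $2^X$ is $B=\{T\cup Z:Z\subseteq Y\}$ with $Y\subseteq X$, $T\subseteq X\setminus Y$; $Y$ is its support; a cube of $C$ is a cube $B\subseteq C$. $C$ is ample if every set shattered by $C$ is the support of a cube of $C$. A concept $c\in C$ is a corner of $C$ if it lies in exactly one inclusion-maximal cube of $C$. $G(C)$ is the graph on $C$ joining $c,c'$ when $|c\Delta c'|=1$; $d(c,c')=|c\Delta c'|$ is the Hamming distance. $C$ is isometric if $G(C)$ is connected and the graph distance in $G(C)$ equals $d(c,c')$ for all $c,c'\in C$; $C$ is weakly isometric if $G(C)$ is connected and the graph distance equals $d(c,c')$ for all $c,c'\in C$ with $d(c,c')\le 2$. *)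

From mathcomp Require Import all_boot.
Set Implicit Arguments. Unset Strict Implicit. Unset Printing Implicit Defensive.

Section Concepts.
Variable X : finType.
Implicit Types (C B : {set {set X}}) (c Y T Z : {set X}).

Definition trace C Y : {set {set X}} := [set c :&: Y | c in C].
Definition shattered C Y : Prop := trace C Y = powerset Y.

Definition cube_of T Y : {set {set X}} := [set T :|: Z | Z in powerset Y].
Definition is_cube_supp B Y : Prop :=
  exists T, T \subset ~: Y /\ B = cube_of T Y.
Definition is_cube B : Prop := exists Y, is_cube_supp B Y.

Definition ample C : Prop :=
  forall Y, shattered C Y -> exists B, is_cube_supp B Y /\ B \subset C.

Definition maximal_cube C B : Prop :=
  [/\ is_cube B, B \subset C &
      forall B', is_cube B' -> B' \subset C -> B \subset B' -> B' = B].

Definition corner C c : Prop :=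
  c \in C /\
  exists B, (maximal_cube C B /\ c \in B) /\
            forall B', maximal_cube C B' -> c \in B' -> B' = B.

Definition hdist c c' : nat := #|(c :\: c') :|: (c' :\: c)|.

Definition adjC C : rel {set X} :=
  fun c c' => [&& c \in C, c' \in C & hdist c c' == 1].

Definition walk C c c' (k : nat) : Prop :=
  exists p : seq {set X}, [/\ path (adjC C) c p, last c p = c' & size p = k].

Definition connectedG C : Prop :=
  forall c c', c \in C -> c' \in C -> exists k, walk C c c' k.

Definition is_gdist C c c' (k : nat) : Prop :=
  walk C c c' k /\ forall k', walk C c c' k' -> k <= k'.

Definition isometric C : Prop :=
  connectedG C /\
  forall c c', c \in C -> c' \in C -> is_gdist C c c' (hdist c c').

Definition weakly_isometric C : Prop :=
  connectedG C /\
  forall c c', c \in C -> c' \in C -> hdist c c' <= 2 ->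
    is_gdist C c c' (hdist c c').

End Concepts.

(* Write x + y (symd x y) for the symmetric difference of concepts, so that the
   neighbours of c in the cube 2^X are the flips c + {z}. A concept c of D is a
   corner of D exactly when D is closed under flips at c: if c + {z} is in D for
   every z in Z, then so is c + Z.

   Removing a corner from an isometric class keeps it isometric (a geodesic leaving
   through the corner can be rerouted inside the cube at the corner), and adding a
   corner to an ample class keeps it ample provided the result is isometric (a
   pattern on Y realised only by the new concept forces all its flips along Y, hence
   the cube at it with support Y). So if every c_i is a corner of C_i, isometry
   descends from C = C_m and ampleness then ascends from the empty class.

   Conversely ample classes restrict to ample classes on subcubes, so ample classes,
   like weakly isometric ones, have a common neighbour for any two concepts at
   distance 2. If c_i is not a corner of C_i, then C_(i-1) has a hole: a cube
   c + 2^Z, |Z| >= 2, all of whose vertices except c and c + Z lie in C_(i-1). A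
   hole with |Z| = 2 has no midpoint, and deleting the last concept of a class with
   a larger hole leaves a hole in the smaller class; by induction along the
   ordering no C_j has a hole. *)

From mathcomp Require Import all_boot.

Section Concepts.
Set Implicit Arguments.
Unset Strict Implicit.
Variable X : finType.
Implicit Types (D E B : {set {set X}}) (a b c x y Y T U V W Z : {set X}).
Implicit Types (e f w : X) (t : bool).

Definition symd x y : {set X} := (x :\: y) :|: (y :\: x).

Lemma in_symd e x y : (e \in symd x y) = ((e \in x) != (e \in y)).
Proof. by rewrite !inE; case: (e \in x); case: (e \in y). Qed.

Lemma hdistE x y : hdist x y = #|symd x y|. Proof. by []. Qed.

Lemma symdC x y : symd x y = symd y x.
Proof. by apply/setP=> e; rewrite !in_symd; case: (e \in x); case: (e \in y). Qed.

Lemma symdA x y z : symd (symd x y) z = symd x (symd y z).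
Proof.
by apply/setP=> e; rewrite !in_symd; case: (e \in x); case: (e \in y); case: (e \in z).
Qed.

Lemma symd0 x : symd x set0 = x.
Proof. by apply/setP=> e; rewrite in_symd inE; case: (e \in x). Qed.

Lemma symdv x : symd x x = set0.
Proof. by apply/setP=> e; rewrite in_symd inE; case: (e \in x). Qed.

Lemma symdK x y : symd x (symd x y) = y.
Proof. by rewrite -symdA symdv symdC symd0. Qed.

Lemma symdKl c x y : symd (symd c x) (symd c y) = symd x y.
Proof. by rewrite symdA -(symdA x) (symdC x) symdA symdK. Qed.

Lemma symd_eq x y z : (symd x y == z) = (y == symd x z).
Proof. by apply/eqP/eqP=> [<-|->]; rewrite symdK. Qed.

Lemma symd_idl c W : (symd c W == c) = (W == set0).
Proof. by rewrite symd_eq symdv. Qed.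

Lemma symd_sub x y Y : x \subset Y -> y \subset Y -> symd x y \subset Y.
Proof. by move=> hx hy; rewrite subUset !(subset_trans (subsetDl _ _)). Qed.

Lemma symd_set1 e f : e != f -> symd [set e] [set f] = [set e; f].
Proof.
move=> hef; apply/setP=> u; rewrite in_symd !inE.
by case: (eqVneq u e) => [->|]; [rewrite (negbTE hef) | case: (u == f)].
Qed.

Lemma symd_set1_set2 e f : e != f -> symd [set e] [set e; f] = [set f].
Proof. by move=> hef; rewrite -symd_set1 // symdK. Qed.

Lemma symdI x y Y : symd x y :&: Y = symd (x :&: Y) (y :&: Y).
Proof.
by apply/setP=> e; rewrite inE !in_symd !inE; case: (e \in Y); rewrite ?andbT ?andbF.
Qed.

Lemma symd_subU x y : symd x y \subset x :|: y.
Proof. by apply/subsetP=> e; rewrite in_symd inE; case: (e \in x); case: (e \in y). Qed.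

Lemma in_setU1_neq D c y : y \in c |: D -> y != c -> y \in D.
Proof. by rewrite in_setU1 => /orP [/eqP -> /eqP | //]. Qed.

Lemma set1_neq0 e : [set e] != set0.
Proof. by rewrite -card_gt0 cards1. Qed.

Lemma set1_neq_card e Z : 2 <= #|Z| -> [set e] != Z.
Proof. by apply: contraTneq => <-; rewrite cards1. Qed.

Lemma symd1_neq c e : symd c [set e] != c.
Proof. by rewrite symd_idl set1_neq0. Qed.

Lemma hdistC x y : hdist x y = hdist y x.
Proof. by rewrite !hdistE symdC. Qed.

Lemma hdistvv x : hdist x x = 0.
Proof. by rewrite hdistE symdv cards0. Qed.

Lemma hdist_triangle x y z : hdist x z <= hdist x y + hdist y z.
Proof.
rewrite !hdistE -(symdKl y x z) (symdC y x).
exact: leq_trans (subset_leq_card (symd_subU _ _)) (leq_card_setU _ _).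
Qed.

Lemma hdist1P x y : reflect (exists e, y = symd x [set e]) (hdist x y == 1).
Proof.
rewrite hdistE; apply: (iffP cards1P) => [[e he]|[e ->]]; exists e.
  by rewrite -he symdK.
by rewrite symdK.
Qed.

Lemma hdist_symdl c x y : hdist (symd c x) (symd c y) = #|symd x y|.
Proof. by rewrite hdistE symdKl. Qed.

Lemma hdist_symd1 x b f : hdist (symd x [set f]) b =
  if f \in symd x b then (hdist x b).-1 else (hdist x b).+1.
Proof.
rewrite !hdistE symdA (symdC [set f]) -symdA symdC.
have [fA|fA] := boolP (f \in symd x b).
  have -> : symd [set f] (symd x b) = symd x b :\ f.
    apply/setP=> e; rewrite in_setD1 in_symd in_set1.
    by case: (eqVneq e f) => [->|]; [rewrite fA | case: (e \in _)].
  by rewrite [#|symd x b|](cardsD1 f) fA.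
have -> : symd [set f] (symd x b) = f |: symd x b.
  apply/setP=> e; rewrite in_setU1 in_symd in_set1.
  by case: (eqVneq e f) => [->|]; [rewrite (negbTE fA) | case: (e \in _)].
by rewrite cardsU1 fA.
Qed.

Lemma walk_hdist D a b k : walk D a b k -> hdist a b <= k.
Proof.
case=> p [hp <- <-] {b k}.
elim: p a hp => [|y p IH] a /=; first by rewrite hdistvv.
case/andP=> /and3P [_ _ /eqP h1] hp.
by apply: leq_trans (hdist_triangle a y _) _; rewrite h1 add1n ltnS; apply: IH.
Qed.

Definition geodesic_steps D := forall x b, x \in D -> b \in D -> x != b ->
  exists y, [/\ y \in D, hdist x y = 1 & hdist y b < hdist x b].

Lemma geodesic_steps_walk D x b : geodesic_steps D -> x \in D -> b \in D ->
  walk D x b (hdist x b).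
Proof.
move=> hD hx hb; have [n le_dn] := ubnP (hdist x b).
elim: n x hx le_dn => // n IH x hx le_dn.
have [->|nxb] := eqVneq x b; first by exists [::]; rewrite hdistvv.
have [y [hy /eqP xy1 lt_yx]] := hD x b hx hb nxb.
have [p [hp hl hs]] := IH y hy (leq_trans lt_yx le_dn).
exists (y :: p); split => //=; first by rewrite hp /adjC hx hy xy1.
apply/anti_leq; rewrite /= hs lt_yx -add1n -(eqP xy1); exact: hdist_triangle.
Qed.

Lemma isometricP D : isometric D <-> geodesic_steps D.
Proof.
split=> [[_ hI] x b hx hb nxb | hD].
  have [[[|y p] [/= hp hl hs]] _] := hI x b hx hb; first by rewrite hl eqxx in nxb.
  case/andP: hp => /and3P [_ hy /eqP xy1] hp; exists y; split => //.
  by have := walk_hdist (ex_intro _ p (And3 hp hl (erefl _))); rewrite -hs.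
split=> x b hx hb; first by exists (hdist x b); apply: geodesic_steps_walk.
by split=> [|k]; [apply: geodesic_steps_walk | apply: walk_hdist].
Qed.

Definition has_midpoints D := forall a b, a \in D -> b \in D -> hdist a b = 2 ->
  exists y, [/\ y \in D, hdist a y = 1 & hdist y b = 1].

Lemma weakly_isometric_midpoints D : weakly_isometric D -> has_midpoints D.
Proof.
case=> _ hW a b ha hb ab2.
have [[p [hp hl hs]] _] := hW a b ha hb (eq_leq ab2); rewrite ab2 in hs.
case: p hp hl hs => [|y [|b' [|]]] //= /andP [/and3P [_ hy /eqP ay1]].
by case/andP=> /and3P [_ _ /eqP yb1] _ <- _; exists y.
Qed.

Lemma isometric_weakly_isometric D : isometric D -> weakly_isometric D.
Proof. by case=> hc hI; split=> // x y hx hy _; apply: hI. Qed.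

(** * Cubes and corners *)

Definition cube_at c Y := cube_of (c :\: Y) Y.

Lemma mem_cube_of T Y x : T \subset ~: Y -> (x \in cube_of T Y) = (x :\: Y == T).
Proof.
move=> /subsetP hT; apply/imsetP/eqP => [[Z] | <-].
  rewrite powersetE => /subsetP hZ ->; apply/setP=> e; rewrite !inE.
  case eT: (e \in T); first by have := hT e eT; rewrite inE => ->.
  by case eZ: (e \in Z); rewrite ?andbF // hZ.
exists (x :&: Y); first by rewrite powersetE subsetIr.
by apply/setP=> e; rewrite !inE; case: (e \in x); case: (e \in Y).
Qed.

Lemma setD_subsetC c Y : c :\: Y \subset ~: Y.
Proof. by apply/subsetP=> e; rewrite !inE => /andP []. Qed.

Lemma mem_cube_at c Y x : (x \in cube_at c Y) = (symd c x \subset Y).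
Proof.
rewrite mem_cube_of ?setD_subsetC //; apply/eqP/subsetP => [h e | h].
  rewrite in_symd; apply: contraR => eY.
  by move/setP: h => /(_ e); rewrite !inE eY /= => ->; rewrite eqxx.
apply/setP=> e; rewrite !inE; case eY: (e \in Y) => //=.
by apply/eqP; apply: contraFT eY; rewrite eq_sym -in_symd; apply: h.
Qed.

Lemma cube_at_id c Y : c \in cube_at c Y.
Proof. by rewrite mem_cube_at symdv sub0set. Qed.

Lemma cube_at_supp c Y : is_cube_supp (cube_at c Y) Y.
Proof. by exists (c :\: Y); rewrite setD_subsetC. Qed.

Lemma cube_at_cube c Y : is_cube (cube_at c Y).
Proof. by exists Y; apply: cube_at_supp. Qed.

Lemma cube_supp_at B Y c : is_cube_supp B Y -> c \in B -> B = cube_at c Y.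
Proof. by case=> T [hT ->]; rewrite mem_cube_of // => /eqP <-. Qed.

Lemma cube_supp_cube_at B Y : is_cube_supp B Y -> exists c, B = cube_at c Y.
Proof.
case=> T [hT BE]; exists T; apply: cube_supp_at; first by exists T.
by rewrite BE mem_cube_of // setDE (setIidPl hT).
Qed.

Lemma cube_at_sub D c Y : (forall W, W \subset Y -> symd c W \in D) ->
  cube_at c Y \subset D.
Proof. by move=> h; apply/subsetP=> x; rewrite mem_cube_at -{2}(symdK c x); apply: h. Qed.

Lemma maximal_cube_exists D B : is_cube B -> B \subset D ->
  exists2 M, maximal_cube D M & B \subset M.
Proof.
move=> hB sBD.
pose cubeb M :=
  [exists Y : {set X}, exists T : {set X}, (T \subset ~: Y) && (M == cube_of T Y)].
pose P M := [&& cubeb M, B \subset M & M \subset D].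
have cubeP M : reflect (is_cube M) (cubeb M).
  apply: (iffP existsP) => [[Y /existsP [T /andP [hT /eqP ->]]] | [Y [T [hT ->]]]].
    by exists Y, T.
  by exists Y; apply/existsP; exists T; rewrite hT /=.
have [|M /and3P [/cubeP hM sBM sMD] Mmax] := @arg_maxnP _ B P (fun M => #|M|).
  by apply/and3P; split=> //; apply/cubeP.
exists M => //; split=> // M' hM' sM'D sMM'; apply/eqP; rewrite eq_sym eqEcard sMM'.
by apply: Mmax; apply/and3P; split; [apply/cubeP | apply: subset_trans sMM' |].
Qed.

Definition flip_closed D c := forall Z,
  (forall z, z \in Z -> symd c [set z] \in D) -> symd c Z \in D.

Lemma corner_flip_closed D c : corner D c -> flip_closed D c.
Proof.
case=> cD [M0 [[[[Y hY] sM0D _] cM0] M0uniq]] Z hZ.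
rewrite (cube_supp_at hY cM0) in sM0D M0uniq.
suff sZY : Z \subset Y by apply: (subsetP sM0D); rewrite mem_cube_at symdK.
apply/subsetP=> z zZ.
have sED : cube_at c [set z] \subset D.
  by apply: cube_at_sub => W; rewrite subset1 => /orP [] /eqP ->; rewrite ?symd0 ?hZ.
have [M hM sEM] := maximal_cube_exists (cube_at_cube c [set z]) sED.
have := subsetP sEM (symd c [set z]); rewrite (M0uniq M hM); last first.
  exact: subsetP sEM c (cube_at_id c _).
by rewrite !mem_cube_at symdK !sub1set; apply; rewrite set11.
Qed.

Lemma flip_closed_corner D c : c \in D -> flip_closed D c -> corner D c.
Proof.
move=> cD hD; pose N := [set z | symd c [set z] \in D].
have sMD : cube_at c N \subset D.
  by apply: cube_at_sub => W /subsetP sWN; apply: hD => z /sWN; rewrite inE.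
have Mmax B : is_cube B -> B \subset D -> c \in B -> B \subset cube_at c N.
  move=> [Y hY] sBD cB; rewrite (cube_supp_at hY cB) in sBD *.
  apply/subsetP=> x; rewrite !mem_cube_at => /subset_trans; apply.
  by apply/subsetP=> y yY; rewrite inE (subsetP sBD) // mem_cube_at symdK sub1set.
have hM : maximal_cube D (cube_at c N).
  split=> // [|B hB sBD sMB]; first exact: cube_at_cube.
  by apply/eqP; rewrite eqEsubset sMB Mmax // (subsetP sMB) ?cube_at_id.
split=> //; exists (cube_at c N); split=> [|B [hB sBD Bmax] cB]; first by rewrite cube_at_id.
by apply/esym/Bmax; rewrite ?Mmax //; apply: cube_at_cube.
Qed.

Lemma cornerP D c : corner D c <-> c \in D /\ flip_closed D c.
Proof.
split=> [hc | [cD hD]]; last exact: flip_closed_corner.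
by split; [case: hc | apply: corner_flip_closed].
Qed.

(** * Adding and removing a corner *)

Lemma geodesic_steps_flip D c d : geodesic_steps D -> c \in D -> d \in D -> c != d ->
  exists2 f, f \in symd c d & symd c [set f] \in D.
Proof.
move=> hD cD dD ncd; have [y [yD /eqP/hdist1P [f yE]]] := hD c d cD dD ncd.
rewrite yE hdist_symd1 in yD *.
by case: ifP => [fcd _ | _]; [exists f | rewrite ltnNge leqnSn].
Qed.

Lemma geodesic_steps_del_corner D c : c \notin D ->
  geodesic_steps (c |: D) -> flip_closed (c |: D) c -> geodesic_steps D.
Proof.
move=> cND hcD hc x b xD bD nxb.
have [y [yD xy1 lt_yx]] := hcD x b (setU1r c xD) (setU1r c bD) nxb.
have [yE|nyc] := eqVneq y c; last by exists y; split=> //; apply: in_setU1_neq nyc.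
rewrite {y yD}yE in xy1 lt_yx.
have ncb : c != b by apply: contraNneq cND => ->.
have [f fcb fD] := geodesic_steps_flip hcD (setU11 c D) (setU1r c bD) ncb.
have [e xE] : exists e, x = symd c [set e] by apply/hdist1P; rewrite hdistC xy1.
have ecb : e \notin symd c b.
  by move: lt_yx; rewrite xE hdist_symd1; case: ifP => // _; rewrite ltnNge leq_pred.
have nef : e != f by apply: contraNneq ecb => ->.
have y'D : symd c [set e; f] \in c |: D.
  by apply: hc => g; rewrite in_set2 => /orP [] /eqP ->; [rewrite -xE setU1r | ].
exists (symd c [set e; f]); split.
- by apply: (in_setU1_neq y'D); rewrite symd_idl; apply/set0Pn; exists e; rewrite !inE eqxx.
- by rewrite xE hdist_symdl symd_set1_set2 ?cards1.
- have y'f : hdist (symd c [set e; f]) (symd c [set f]) = 1.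
    by rewrite hdist_symdl -symd_set1 // symdA symdv symd0 cards1.
  have cb_gt0 : 0 < hdist c b by rewrite hdistE card_gt0; apply/set0Pn; exists f.
  have := hdist_triangle (symd c [set e; f]) (symd c [set f]) b.
  by rewrite y'f hdist_symd1 fcb add1n prednK // => /leq_ltn_trans; apply.
Qed.

Lemma flip_of_unique_trace D c Y e : geodesic_steps (c |: D) ->
  shattered (c |: D) Y -> (forall d, d \in D -> d :&: Y != c :&: Y) ->
  e \in Y -> symd c [set e] \in c |: D.
Proof.
move=> hcD hY cY eY.
have : symd (c :&: Y) [set e] \in trace (c |: D) Y.
  by rewrite hY powersetE symd_sub ?subsetIr ?sub1set.
case/imsetP=> d dcD dY.
have ncd : c != d by apply: contraNneq (symd1_neq (c :&: Y) e) => cd; rewrite dY cd.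
have [f fcd fD] := geodesic_steps_flip hcD (setU11 c D) dcD ncd.
have fY : f \in Y.
  move: (cY _ (in_setU1_neq fD (symd1_neq c f))); apply: contraTT => fNY.
  rewrite negbK symdI; apply/eqP.
  rewrite -[RHS]symd0; congr symd; apply/setP=> g.
  by rewrite !inE; case: eqP => // ->; apply: negbTE.
suff <- : f = e by [].
by move: (conj fcd fY) => /andP; rewrite -in_setI symdI -dY symdK in_set1 => /eqP.
Qed.

Lemma ample_add_corner D c : ample D ->
  geodesic_steps (c |: D) -> flip_closed (c |: D) c -> ample (c |: D).
Proof.
move=> hA hcD hc Y hY.
have [/existsP [d /andP [dD /eqP dY]] | cY] := boolP [exists d in D, d :&: Y == c :&: Y].
  have [|B [hB sBD]] := hA Y.
    rewrite /shattered -hY /trace imsetU1; apply/esym/setUidPr.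
    by rewrite sub1set -dY; apply: imset_f.
  by exists B; split=> //; apply: subset_trans sBD (subsetUr _ _).
exists (cube_at c Y); split; first exact: cube_at_supp.
apply: cube_at_sub => W sWY; apply: hc => e eW.
apply: flip_of_unique_trace hY _ (subsetP sWY e eW) => // d dD.
by apply: contraNneq cY => dY; apply/existsP; exists d; rewrite dD dY /=.
Qed.

Lemma ample0 : ample (set0 : {set {set X}}).
Proof.
move=> Y hY; have : set0 \in powerset Y by rewrite powersetE sub0set.
by rewrite -hY /trace imset0 inE.
Qed.

(** * Subcubes of ample classes *)

Lemma trace_sub D Y : trace D Y \subset powerset Y.
Proof. by apply/subsetP=> P /imsetP [x _ ->]; rewrite powersetE subsetIr. Qed.

Lemma shattered_sub D E Y : D \subset E -> shattered D Y -> shattered E Y.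
Proof. by move=> sDE hD; apply/eqP; rewrite eqEsubset trace_sub -{1}hD imsetS. Qed.

Lemma cube_at_shattered D c Y : cube_at c Y \subset D -> shattered D Y.
Proof.
move=> sCD; apply/eqP; rewrite eqEsubset trace_sub; apply/subsetP=> P.
rewrite powersetE => /subsetP sPY; apply/imsetP; exists ((c :\: Y) :|: P).
  apply: (subsetP sCD); rewrite mem_cube_at; apply/subsetP=> e.
  rewrite in_symd !inE; case eY: (e \in Y) => //.
  by case: (e \in c); rewrite //= (contraFF (sPY e)).
apply/setP=> e; rewrite !inE.
by case eY: (e \in Y); rewrite /= ?andbT // andbF (contraFF (sPY e)).
Qed.

Lemma cube_at_subset x y Y Y' : symd x y \subset Y' -> Y \subset Y' ->
  cube_at y Y \subset cube_at x Y'.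
Proof.
move=> sxy sYY'; apply/subsetP=> u; rewrite !mem_cube_at => syu.
by rewrite -(symdKl y x u) (symdC y x) symd_sub // (subset_trans syu sYY').
Qed.

Definition half E w t := [set x in E | (w \in x) == t].

Lemma half_sub E w t : half E w t \subset E.
Proof. by apply/subsetP=> x; rewrite inE => /andP []. Qed.

Lemma shattered_half_notin E w t Y : shattered (half E w t) Y -> w \notin Y.
Proof.
move=> hY; apply/negP=> wY.
have /imsetP [x1] : [set w] \in trace (half E w t) Y by rewrite hY powersetE sub1set.
have /imsetP [x0] : set0 \in trace (half E w t) Y by rewrite hY powersetE sub0set.
rewrite !inE => /andP [_ /eqP <-] /setP /(_ w) + /andP [_ /eqP x1t] /setP /(_ w).
by rewrite !inE wY x1t eqxx andbT => <-.
Qed.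

Lemma cube_at_half E w c Y : w \notin Y -> cube_at c Y \subset E ->
  cube_at c Y \subset half E w (w \in c).
Proof.
move=> wNY sCE; apply/subsetP=> x xC; rewrite inE (subsetP sCE) //=.
move: xC; rewrite mem_cube_at => /subsetP /(_ w) /contra /(_ wNY).
by rewrite in_symd negbK eq_sym.
Qed.

Lemma shattered_setU1 E w Y : w \notin Y ->
  (forall t, shattered (half E w t) Y) -> shattered E (w |: Y).
Proof.
move=> wNY hY; apply/eqP; rewrite eqEsubset trace_sub; apply/subsetP=> P.
rewrite powersetE => /subsetP sPY.
have : P :&: Y \in trace (half E w (w \in P)) Y by rewrite hY powersetE subsetIr.
case/imsetP=> x; rewrite inE => /andP [xE /eqP xw] /setP PY.
apply/imsetP; exists x => //; apply/setP=> u; have := PY u; rewrite !inE.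
case: (eqVneq u w) => [-> _|nuw /=]; first by rewrite xw (negbTE wNY) andbT.
have := sPY u; rewrite !inE (negbTE nuw) /=.
by case: (u \in Y); case: (u \in P); rewrite ?andbT ?andbF => // /(_ isT).
Qed.

Lemma ample_half E w t : ample E -> ample (half E w t).
Proof.
move=> hA Y hY; have wNY := shattered_half_notin hY.
have [B [hB sBE]] := hA Y (shattered_sub (half_sub E w t) hY).
have [c BE] := cube_supp_cube_at hB; rewrite {B hB}BE in sBE.
have [ct|nct] := eqVneq (w \in c) t.
  by exists (cube_at c Y); split; [apply: cube_at_supp | rewrite -ct cube_at_half].
(* The cube found lies in the wrong half, so both halves shatter Y, hence so does
   E on w |: Y, and a cube with support w |: Y has a face on the side t. *)
have hwY : shattered E (w |: Y).
  apply: shattered_setU1 => // t'; have [->|nt't] := eqVneq t' t; first exact: hY.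
  suff -> : t' = (w \in c) by apply: cube_at_shattered (cube_at_half wNY sBE).
  by move: nct nt't; case: t'; case: (t); case: (w \in c).
have [B' [hB' sB'E]] := hA _ hwY.
have [T' B'E] := cube_supp_cube_at hB'; rewrite {B' hB'}B'E in sB'E.
pose x := if w \in T' == t then T' else symd T' [set w].
have sT'x : symd T' x \subset w |: Y.
  by rewrite /x; case: ifP => _; rewrite ?symdv ?sub0set // symdK sub1set setU11.
have xt : (w \in x) = t.
  rewrite /x; case: ifP => [/eqP //|].
  by rewrite in_symd inE eqxx; case: (t); case: (w \in T').
exists (cube_at x Y); split; first exact: cube_at_supp.
rewrite -xt cube_at_half // (subset_trans _ sB'E) // cube_at_subset ?subsetUr //.
Qed.

Definition restrict D a W := [set x in D | [forall z in W, (z \in x) == (z \in a)]].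

Lemma restrict_sub D a W : restrict D a W \subset D.
Proof. by apply/subsetP=> x; rewrite inE => /andP []. Qed.

Lemma restrict_set0 D a : restrict D a set0 = D.
Proof.
by apply/setP=> x; rewrite inE; case: (x \in D) => //; apply/forall_inP=> z; rewrite inE.
Qed.

Lemma restrict_setU1 D a W w :
  restrict D a (w |: W) = half (restrict D a W) w (w \in a).
Proof.
apply/setP=> x; rewrite !inE -andbA; congr (_ && _).
apply/forall_inP/andP => [h | [/forall_inP h xa] z].
  by split; [apply/forall_inP=> z zW; apply: h | apply: h]; rewrite !inE ?zW ?eqxx ?orbT.
by rewrite in_setU1 => /orP [/eqP -> | /h].
Qed.

Lemma ample_restrict D a W : ample D -> ample (restrict D a W).
Proof.
move=> hA; have [n] := ubnP #|W|; elim: n W => // n IH W ltWn.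
have [->|[w wW]] := set_0Vmem W; first by rewrite restrict_set0.
rewrite -(setD1K wW) restrict_setU1; apply/ample_half/IH.
by move: ltWn; rewrite (cardsD1 w W) wW.
Qed.

Lemma shattered_set1 D x y e : x \in D -> y \in D -> e \in symd x y ->
  shattered D [set e].
Proof.
move=> xD yD exy; apply/eqP; rewrite eqEsubset trace_sub powerset1.
have tr z : z \in D -> (if e \in z then [set e] else set0) \in trace D [set e].
  move=> zD; apply/imsetP; exists z => //; case ez: (e \in z); apply/setP=> u; rewrite !inE.
    by case: (eqVneq u e) => [->|]; rewrite ?ez ?andbF ?andbT.
  by case: (eqVneq u e) => [->|]; rewrite ?ez ?andbF ?andbT.
move: exy; rewrite in_symd; move: (tr x xD) (tr y yD).
by case: (e \in x); case: (e \in y) => // tx ty _; rewrite subUset !sub1set ?tx ?ty.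
Qed.

Lemma ample_midpoints D : ample D -> has_midpoints D.
Proof.
move=> hA a b aD bD; rewrite hdistE => /eqP/cards2P [e [f [nef abE]]].
pose F := restrict D a (~: [set e; f]).
have aF : a \in F by rewrite inE aD; apply/forall_inP.
have bF : b \in F.
  rewrite inE bD; apply/forall_inP=> z; rewrite in_setC -abE in_symd.
  by rewrite negbK eq_sym.
have eab : e \in symd a b by rewrite abE !inE eqxx.
have [B [hB sBF]] := ample_restrict hA (shattered_set1 aF bF eab).
have [T BE] := cube_supp_cube_at hB; rewrite {B hB}BE in sBF.
have aT : symd a T \subset [set e; f].
  apply/subsetP=> z; move: (subsetP sBF T (cube_at_id T _)); rewrite inE.
  case/andP=> _ /forall_inP /(_ z); rewrite in_symd in_setC eq_sym.
  by case: (z \in [set e; f]) => // /(_ isT) ->.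
(* The edge {T, T + {e}} of F lies in the square a + 2^{e, f}; its end a + Q is a
   common neighbour of a and b. *)
pose Q := if f \in symd a T then [set f] else [set e].
exists (symd a Q); split.
- apply: (subsetP (restrict_sub D a (~: [set e; f]))); apply: (subsetP sBF).
  rewrite mem_cube_at -symdA (symdC T); apply/subsetP=> z; rewrite in_symd in_set1.
  have zU : z \in symd a T -> (z == e) || (z == f) by move/(subsetP aT); rewrite !inE.
  have [//|nze] := eqVneq z e; move: zU; rewrite /Q (negbTE nze) /=.
  case: ifP => fU; rewrite in_set1 ?(negbTE nze);
    case: (eqVneq z f) => [->|nzf]; rewrite ?fU ?(negbTE nzf) //=; by case: (z \in _).
- by rewrite hdistE symdK /Q; case: ifP; rewrite cards1.
- rewrite hdistE symdA (symdC Q) -symdA abE /Q; case: ifP => _.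
    by rewrite symdC setUC symd_set1_set2 1?eq_sym // cards1.
  by rewrite symdC symd_set1_set2 // cards1.
Qed.

(** * Holes *)

Definition hole D c Z := 2 <= #|Z| /\
  forall W, W \subset Z -> (symd c W \in D) = (W != set0) && (W != Z).

Lemma set1_common_neighbours e f U : e != f ->
  #|symd [set e] U| = 1 -> #|symd U [set f]| = 1 -> U = set0 \/ U = [set e; f].
Proof.
move=> nef /eqP/cards1P [g gE] /eqP/cards1P [h hE].
have UE : U = symd [set e] [set g] by rewrite -gE symdK.
have [eg|neg] := eqVneq e g; first by left; rewrite UE eg symdv.
have [gf|ngf] := eqVneq g f; first by right; rewrite UE gf symd_set1.
have memU z : z \in U -> z != f -> z = h.
  by move=> zU nzf; apply/set1P; rewrite -hE in_symd zU in_set1 (negbTE nzf).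
have Ug : g \in U by rewrite UE in_symd !in_set1 eqxx (eq_sym g e) (negbTE neg).
have Ue : e \in U by rewrite UE in_symd !in_set1 eqxx (negbTE neg).
by move: neg; rewrite (memU _ Ug ngf) (memU _ Ue nef) eqxx.
Qed.

Lemma hole_set0 c Z : ~ hole set0 c Z.
Proof.
case=> Z2 hZ; have [e eZ] : exists e, e \in Z.
  by apply/set0Pn; rewrite -card_gt0; case: #|Z| Z2.
by have := hZ [set e]; rewrite sub1set in_set0 set1_neq0 set1_neq_card // => /(_ eZ).
Qed.

Lemma hole2_midpoints D c Z : has_midpoints D -> #|Z| = 2 -> ~ hole D c Z.
Proof.
move=> hD /eqP/cards2P [e [f [nef ->]]] [Z2 hZ].
have flipD g : g \in [set e; f] -> symd c [set g] \in D.
  by move=> gZ; rewrite hZ ?sub1set // set1_neq0 set1_neq_card.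
have ef2 : hdist (symd c [set e]) (symd c [set f]) = 2.
  by rewrite hdist_symdl symd_set1 // cards2 nef.
have [y [yD ey yf]] := hD _ _ (flipD e (set21 e f)) (flipD f (set22 e f)) ef2.
rewrite -(symdK c y) !hdist_symdl in yD ey yf.
by case: (set1_common_neighbours nef ey yf) yD => ->; rewrite hZ ?sub0set ?subxx ?eqxx ?andbF.
Qed.

Lemma hole_del_outside D c y Z : ~~ (symd c y \subset Z) ->
  hole (y |: D) c Z -> hole D c Z.
Proof.
move=> ycZ [Z2 hZ]; split=> // W sWZ; rewrite -hZ // in_setU1.
by have /negbTE -> : symd c W != y by apply: contraNneq ycZ => <-; rewrite symdK.
Qed.

Lemma hole_del_vertex D c y Z w : y \notin D -> symd c y = [set w] -> w \in Z ->
  3 <= #|Z| -> hole (y |: D) c Z -> hole D y (Z :\ w).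
Proof.
move=> yND cyE wZ Z3 [_ hZ]; split=> [|V sVZ]; first by move: Z3; rewrite (cardsD1 w) wZ.
have wNV : w \notin V by apply/negP=> /(subsetP sVZ); rewrite !inE eqxx.
have yVE : symd y V = symd c (w |: V).
  rewrite -(symdK c y) cyE symdA; congr symd; apply/setP=> u; rewrite in_symd !inE.
  by case: (eqVneq u w) => [->|]; [rewrite (negbTE wNV) | case: (u \in V)].
have [->|nV0] := eqVneq V set0; first by rewrite symd0 (negbTE yND).
have sWZ : w |: V \subset Z by rewrite subUset sub1set wZ (subset_trans sVZ) ?subsetDl.
rewrite /=; have := hZ _ sWZ; rewrite -yVE in_setU1 symd_idl (negbTE nV0) /= => ->.
rewrite -card_gt0 cardsU1 wNV /=; congr (~~ _); apply/eqP/eqP=> [VZ | ->].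
  by rewrite -VZ setU1K.
by rewrite setD1K.
Qed.

Lemma hole_del_inner D c y Z : y \notin D -> symd c y \subset Z -> 2 <= #|symd c y| ->
  hole (y |: D) c Z -> hole D c (symd c y).
Proof.
move=> yND sYZ Y2 [_ hZ]; split=> // V sVY.
have YnZ : symd c y != Z.
  by have := hZ _ sYZ; rewrite symdK setU11 => /esym /andP [].
have VnZ : V != Z by apply: contraNneq YnZ => VZ; rewrite eqEsubset sYZ -VZ.
have := hZ V (subset_trans sVY sYZ); rewrite VnZ andbT in_setU1 symd_eq.
have [->|nVY] := eqVneq V (symd c y); first by rewrite symdK (negbTE yND) andbF.
by rewrite andbT.
Qed.

Lemma hole_del D c y Z : y \notin D -> 3 <= #|Z| -> hole (y |: D) c Z ->
  exists c' Z', hole D c' Z'.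
Proof.
move=> yND Z3 hcZ; have [sYZ|] := boolP (symd c y \subset Z); last first.
  by move/hole_del_outside/(_ hcZ); exists c, Z.
have [/eqP /cards1P [w cyE]|Y1] := eqVneq #|symd c y| 1.
  exists y, (Z :\ w); apply: hole_del_vertex (cyE) _ Z3 hcZ => //.
  by rewrite -sub1set -cyE.
exists c, (symd c y); apply: hole_del_inner (sYZ) _ (hcZ) => //.
have : symd c y != set0.
  by case: hcZ => _ /(_ _ sYZ); rewrite symdK setU11 => /esym /andP [].
by rewrite -card_gt0; case: #|_| Y1 => [|[]].
Qed.

Lemma flip_closed_add D y : y \notin D -> (forall Z, ~ hole D y Z) ->
  flip_closed (y |: D) y.
Proof.
move=> yND noH Z; have [n] := ubnP #|Z|; elim: n Z => // n IH Z ltZn hZ.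
have [|Z2] := leqP #|Z| 1.
  rewrite leq_eqVlt ltnS leqn0 cards_eq0 => /orP [/cards1P [z Ze] | /eqP ->].
    by rewrite Ze hZ // Ze set11.
  by rewrite symd0 setU11.
apply/negPn/negP=> yZN; apply: (noH Z); split=> // W sWZ.
have [->|nWZ] := eqVneq W Z; first by rewrite andbF; apply: contraNF yZN; apply: setU1r.
have [->|nW0] := eqVneq W set0; first by rewrite symd0 (negbTE yND).
have ltWn : #|W| < n.
  have pWZ : W \proper Z by rewrite properEneq nWZ.
  by move: (proper_card pWZ) ltZn; rewrite ltnS; apply: leq_trans.
have := IH W ltWn (fun z zW => hZ z (subsetP sWZ z zW)).
by move/in_setU1_neq; apply; rewrite symd_idl.
Qed.

Definition prefix_set (s : seq {set X}) i := [set c in take i s].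

Section Prefixes.
Variable s : seq {set X}.
Hypothesis s_uniq : uniq s.

Lemma prefix_set0 : prefix_set s 0 = set0.
Proof. by apply/setP=> x; rewrite !inE take0. Qed.

Lemma prefix_setS i : i < size s -> prefix_set s i.+1 = nth set0 s i |: prefix_set s i.
Proof. by move=> lt_is; apply/setP=> x; rewrite !inE (take_nth set0 lt_is) mem_rcons. Qed.

Lemma nth_notin_prefix_set i : i < size s -> nth set0 s i \notin prefix_set s i.
Proof.
move=> lt_is; have := take_uniq i.+1 s_uniq.
by rewrite (take_nth set0 lt_is) rcons_uniq inE => /andP [].
Qed.

Lemma prefix_set_no_hole :
  (forall i, 1 <= i <= size s -> has_midpoints (prefix_set s i)) ->
  forall i c Z, i <= size s -> ~ hole (prefix_set s i) c Z.
Proof.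
move=> hM; elim=> [|i IH] c Z le_is hcZ.
  by move: hcZ; rewrite prefix_set0; apply: hole_set0.
have [Z2|nZ2] := eqVneq #|Z| 2; first by apply: hole2_midpoints (hM _ _) Z2 hcZ.
have Z3 : 3 <= #|Z| by case: hcZ => Z2 _; rewrite ltn_neqAle eq_sym nZ2.
rewrite prefix_setS // in hcZ.
have [c' [Z' ]] := hole_del (nth_notin_prefix_set le_is) Z3 hcZ.
exact: IH (ltnW le_is).
Qed.

Lemma prefix_set_corner :
  (forall i, 1 <= i <= size s -> has_midpoints (prefix_set s i)) ->
  forall i, 1 <= i <= size s -> corner (prefix_set s i) (nth set0 s i.-1).
Proof.
move=> hM [|i] //= le_is; apply/cornerP; rewrite prefix_setS //; split; first exact: setU11.
apply: flip_closed_add (nth_notin_prefix_set le_is) _ => Z.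
exact: prefix_set_no_hole hM _ _ _ (ltnW le_is).
Qed.

Lemma prefix_set_geodesic_steps : geodesic_steps (prefix_set s (size s)) ->
  (forall i, 1 <= i <= size s -> corner (prefix_set s i) (nth set0 s i.-1)) ->
  forall i, i <= size s -> geodesic_steps (prefix_set s i).
Proof.
move=> htop hc i; have [k] := ubnP (size s - i); elim: k i => // k IH i lt_k le_is.
have [->|lt_is] := eqVneq i (size s); first exact: htop.
have {}lt_is : i < size s by rewrite ltn_neqAle lt_is.
have hS : geodesic_steps (prefix_set s i.+1) by apply: IH (lt_is); rewrite -ltnS subnSK.
rewrite prefix_setS // in hS.
apply: geodesic_steps_del_corner (nth_notin_prefix_set lt_is) hS _.
by have /cornerP [_] := hc i.+1 lt_is; rewrite prefix_setS.
Qed.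

Lemma prefix_set_ample :
  (forall i, 1 <= i <= size s -> corner (prefix_set s i) (nth set0 s i.-1)) ->
  (forall i, i <= size s -> geodesic_steps (prefix_set s i)) ->
  forall i, i <= size s -> ample (prefix_set s i).
Proof.
move=> hc hS; elim=> [|i IH] lt_is; first by rewrite prefix_set0; apply: ample0.
have /cornerP [_] := hc i.+1 lt_is; have := hS _ lt_is.
rewrite prefix_setS //; apply: ample_add_corner; exact: IH (ltnW lt_is).
Qed.

End Prefixes.

End Concepts.

Theorem proposition4p1 (X : finType) (C : {set {set X}}) (s : seq {set X}) :
  isometric C -> uniq s -> [set c in s] = C ->
  [<-> (forall i, 1 <= i <= size s -> ample [set c in take i s]);
       (forall i, 1 <= i <= size s -> corner [set c in take i s] (nth set0 s i.-1));
       (forall i, 1 <= i <= size s -> isometric [set c in take i s]);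
       (forall i, 1 <= i <= size s -> weakly_isometric [set c in take i s])].
Proof.
move=> hC s_uniq sC.
have htop : geodesic_steps (prefix_set s (size s)).
  by apply/isometricP; rewrite /prefix_set take_size sC.
tfae.
- by move=> hA; apply: prefix_set_corner => // i /hA /ample_midpoints.
- move=> hc i /andP [_ le_is]; apply/isometricP.
  exact: prefix_set_geodesic_steps s_uniq htop hc i le_is.
- by move=> hI i /hI /isometric_weakly_isometric.
- move=> hW.
  have hc := prefix_set_corner s_uniq (fun i hi => weakly_isometric_midpoints (hW i hi)).
  move=> i /andP [_ le_is].
  exact: prefix_set_ample hc (prefix_set_geodesic_steps s_uniq htop hc) i le_is.
Qed.
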